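(* Let $(\Sigma,\operatorname{dist})$ be a metric space and let $x_0\in\Sigma$ have a compact neighborhood. Put $X=\mathbb{R}\times\Sigma$, $p=(0,x_0)$ and $\pi_1(s,x)=s$. Let $W\colon X\to\mathbb{R}$ be continuous with $W(p)=0$, $W(q)>0$ for all $q\neq p$, and $\int_{-1}^0\frac{ds}{W(s,x_0)}=\int_0^1\frac{ds}{W(s,x_0)}=\infty$. Then there is a unique partial flow $\phi$ on $X$ with horizontal trajectories, having a fake singularity at $p$, and satisfying $\dot\pi_1=W$, i.e. $\frac{d}{dt}\big|_{t=0}\pi_1(\phi_t(q))=W(q)$ for all $q\in X$.
   Context: A partial flow on a metric space $X$ is a continuous map $\phi\colon\Gamma\to X$ on an open set $\Gamma\subset\mathbb{R}\times X$. Here $\Gamma_x=\{t:(t,x)\in\Gamma\}$ is a connected set containing $0$, $\Gamma_{\phi_t(x)}=\Gamma_x-t$, $\phi_0=\mathrm{id}$, and $\phi_s\phi_t=\phi_{s+t}$ where defined. A partial flow on $\mathbb{R}\times\Sigma$ has horizontal trajectories if every trajectory is contained in a set of the form $\mathbb{R}\times\{x\}$. A point $p$ is an isolated point if $\{p\}$ is an isolated set, i.e. it has a compact neighborhood $N$ such that $\phi_{\Gamma_x}(x)\subseteq N$ implies $x=p$. An isolated point $p$ is a fake singularity if there are points $x_s,x_u\neq p$ such that: (1) every $x\neq p$ with $\phi_t(x)\to p$ as $t\to+\infty$ lies on the trajectory of $x_s$; (2) every $x\neq p$ with $\phi_t(x)\to p$ as $t\to-\infty$ lies on the trajectory of $x_u$.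 *)

From Stdlib Require Import Reals List.
Open Scope R_scope.

Definition is_metric {T : Type} (d : T -> T -> R) : Prop :=
  (forall x y, 0 <= d x y) /\ (forall x y, d x y = 0 <-> x = y) /\
  (forall x y, d x y = d y x) /\ (forall x y z, d x z <= d x y + d y z).

Definition is_open {T : Type} (d : T -> T -> R) (U : T -> Prop) : Prop :=
  forall x, U x -> exists r, 0 < r /\ forall y, d x y < r -> U y.

Definition is_nbhd {T : Type} (d : T -> T -> R) (N : T -> Prop) (x : T) : Prop :=
  exists U, is_open d U /\ U x /\ forall y, U y -> N y.

Definition is_compact {T : Type} (d : T -> T -> R) (K : T -> Prop) : Prop :=
  forall (I : Type) (O : I -> T -> Prop),
    (forall i, is_open d (O i)) ->
    (forall x, K x -> exists i, O i x) ->
    exists l : list I, forall x, K x -> exists i, In i l /\ O i x.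

(** Product (max) metric, inducing the product topology. *)
Definition prod_dist {A B : Type} (dA : A -> A -> R) (dB : B -> B -> R)
  (u v : A * B) : R := Rmax (dA (fst u) (fst v)) (dB (snd u) (snd v)).

Definition absdist (a b : R) : R := Rabs (a - b).

Definition is_continuous_on {A B : Type} (dA : A -> A -> R) (dB : B -> B -> R)
  (D : A -> Prop) (f : A -> B) : Prop :=
  forall a, D a -> forall eps, 0 < eps -> exists delta, 0 < delta /\
    forall a', D a' -> dA a a' < delta -> dB (f a) (f a') < eps.

(** * Partial flows on a metric space (T, dT).
    The domain Gamma ⊂ R × T is [G : R -> T -> Prop] ([G t x] means (t,x) ∈ Gamma);
    the flow is [phi : R -> T -> T], only meaningful on Gamma. *)
Definition partial_flow {T : Type} (dT : T -> T -> R)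
  (G : R -> T -> Prop) (phi : R -> T -> T) : Prop :=
  is_open (prod_dist absdist dT) (fun u => G (fst u) (snd u)) /\
  is_continuous_on (prod_dist absdist dT) dT (fun u => G (fst u) (snd u))
    (fun u => phi (fst u) (snd u)) /\
  (forall x, G 0 x) /\
  (* Gamma_x is connected (an interval, as it contains 0) *)
  (forall x t s, G t x -> (0 <= s <= t \/ t <= s <= 0) -> G s x) /\
  (forall x t, G t x -> forall s, G s (phi t x) <-> G (s + t) x) /\
  (forall x, phi 0 x = x) /\
  (forall x t s, G t x -> G s (phi t x) -> phi s (phi t x) = phi (s + t) x).

Definition on_trajectory {T : Type} (G : R -> T -> Prop) (phi : R -> T -> T)
  (x y : T) : Prop := exists t, G t x /\ phi t x = y.

Definition tends_fwd {T : Type} (dT : T -> T -> R) (G : R -> T -> Prop)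
  (phi : R -> T -> T) (x p : T) : Prop :=
  (forall t, 0 <= t -> G t x) /\
  forall eps, 0 < eps -> exists T0, forall t, T0 <= t -> dT (phi t x) p < eps.

Definition tends_bwd {T : Type} (dT : T -> T -> R) (G : R -> T -> Prop)
  (phi : R -> T -> T) (x p : T) : Prop :=
  (forall t, t <= 0 -> G t x) /\
  forall eps, 0 < eps -> exists T0, forall t, t <= T0 -> dT (phi t x) p < eps.

Definition isolated_point {T : Type} (dT : T -> T -> R) (G : R -> T -> Prop)
  (phi : R -> T -> T) (p : T) : Prop :=
  exists N, is_compact dT N /\ is_nbhd dT N p /\
    forall x, (forall t, G t x -> N (phi t x)) -> x = p.

Definition fake_singularity {T : Type} (dT : T -> T -> R) (G : R -> T -> Prop)
  (phi : R -> T -> T) (p : T) : Prop :=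
  isolated_point dT G phi p /\
  exists xs xu, xs <> p /\ xu <> p /\
    (forall x, x <> p -> tends_fwd dT G phi x p -> on_trajectory G phi xs x) /\
    (forall x, x <> p -> tends_bwd dT G phi x p -> on_trajectory G phi xu x).

Definition Xdist {S : Type} (d : S -> S -> R) : R * S -> R * S -> R :=
  prod_dist absdist d.

Definition horizontal {S : Type} (G : R -> R * S -> Prop)
  (phi : R -> R * S -> R * S) : Prop :=
  forall t q, G t q -> snd (phi t q) = snd q.

Definition good_flow {S : Type} (d : S -> S -> R) (x0 : S) (W : R * S -> R)
  (G : R -> R * S -> Prop) (phi : R -> R * S -> R * S) : Prop :=
  partial_flow (Xdist d) G phi /\
  horizontal G phi /\
  fake_singularity (Xdist d) G phi (0, x0) /\
  (forall q, derivable_pt_lim (fun t => fst (phi t q)) 0 (W q)).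

From Stdlib Require Import Reals List Lra Classical ClassicalEpsilon Ranalysis5.
From Coquelicot Require Import Coquelicot.
Open Scope R_scope.

(* Along each line [R × {y}] a flow with [dπ1/dt = W] moves with speed [W], so it needs time
   [transit y a b = ∫_a^b du / W(u, y)] to go from [(a, y)] to [(b, y)] while [W] stays
   positive in between. This determines the flow: [φ_t(s, y) = (σ, y)] with
   [transit y s σ = t]. As [∫ du / W(u, x0)] diverges on both sides of [0], no trajectory
   reaches [p] in finite time and none leaves it, while [σ] still depends continuously on
   the data near [p]. The points flowing into [p] forward (backward) in time are then exactly
   those of the negative (positive) half of the axis [R × {x0}], and [[-1, 1] × K] isolates
   [p]. Conversely, along the trajectories of any such flow elapsed time equals [transit],
   and the openness of its domain forces that domain to be the maximal one above. *)

Lemma real_induction (c e : R) (A : R -> Prop) : (forall z, z < c -> A z) ->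
  (forall x, c <= x <= e -> exists rho, 0 < rho /\
     forall y, x - rho < y -> A y -> forall z, z < x + rho -> A z) ->
  A e.
Proof.
  intros hbase hloc.
  destruct (Rlt_dec e c) as [hec|hce]; [now apply hbase|].
  set (E := fun x => x <= e /\ A x).
  assert (hb : bound E) by (exists e; intros x [hx _]; exact hx).
  assert (hne : exists x, E x) by (exists (c - 1); split; [lra| apply hbase; lra]).
  destruct (completeness E hb hne) as [m [hub hlub]].
  assert (hme : m <= e) by (apply hlub; intros x [hx _]; exact hx).
  assert (hcm : c <= m).
  { destruct (Rle_dec c m) as [h|h]; [exact h|].
    assert (hE : E ((m + c) / 2)) by (split; [lra| apply hbase; lra]).
    apply hub in hE; lra. }
  destruct (hloc m (conj hcm hme)) as [rho [hrho hA]].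
  destruct (classic (exists y, E y /\ m - rho < y)) as [[y [[_ hy] hmy]]|hno].
  - assert (hall : forall z, z < m + rho -> A z) by (apply (hA y); auto).
    destruct (Rle_dec e m) as [h|h]; [apply hall; lra|].
    assert (hE : E (Rmin e (m + rho / 2))).
    { split; [apply Rmin_l|]. apply hall. unfold Rmin; destruct (Rle_dec e (m + rho / 2)); lra. }
    apply hub in hE. unfold Rmin in hE; destruct (Rle_dec e (m + rho / 2)); lra.
  - assert (m <= m - rho); [|lra].
    apply hlub. intros x hx. destruct (Rle_dec x (m - rho)) as [h|h]; [exact h|].
    exfalso; apply hno; exists x; split; [exact hx| lra].
Qed.

Lemma IVT_le (f : R -> R) a b v : a <= b -> (forall x, a <= x <= b -> continuity_pt f x) ->
  f a <= v <= f b -> exists x, a <= x <= b /\ f x = v.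
Proof.
  intros hab hc hv.
  destruct (Req_dec (f a) v); [exists a; split; [lra| assumption]|].
  destruct (Req_dec (f b) v); [exists b; split; [lra| assumption]|].
  destruct (IVT_interv (fun x => f x - v) a b) as [z [hz e]]; try lra.
  - intros x hx. apply continuity_pt_minus; [now apply hc| apply continuity_pt_const; now intros ? ?].
  - destruct hab as [h|h]; [exact h| subst; lra].
  - exists z; split; [exact hz| lra].
Qed.

Lemma Rabs_inv_sub_le m A B eta : 0 < m -> m <= A -> m <= B -> Rabs (A - B) < eta ->
  Rabs (/ A - / B) <= eta / (m * m).
Proof.
  intros hm hA hB h.
  replace (/ A - / B) with ((B - A) * / (A * B)) by (field; lra).
  rewrite Rabs_mult, (Rabs_right (/ (A * B))) by (left; apply Rinv_0_lt_compat; nra).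
  unfold Rdiv. apply Rmult_le_compat.
  - apply Rabs_pos.
  - left; apply Rinv_0_lt_compat; nra.
  - rewrite Rabs_minus_sym; lra.
  - apply Rinv_le_contravar; [nra| apply Rmult_le_compat; lra].
Qed.

Lemma derivable_pt_lim_local_inverse (F f : R -> R) s L : 0 < L ->
  derivable_pt_lim F s L -> F s = 0 -> f 0 = s ->
  (forall eps, 0 < eps -> exists del, 0 < del /\
     forall t, Rabs t < del -> Rabs (f t - s) < eps /\ F (f t) = t) ->
  derivable_pt_lim f 0 (/ L).
Proof.
  intros hL hD hF0 hf0 hC eps he.
  set (e2 := Rmin (L / 2) (eps * L * L / 8)).
  assert (he2 : 0 < e2) by (unfold e2; apply Rmin_glb_lt; [lra|];
    apply Rmult_lt_0_compat; [repeat apply Rmult_lt_0_compat|]; lra).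
  destruct (hD e2 he2) as [d2 Hd2].
  destruct (hC d2 (cond_pos d2)) as [del [hdel Hc]].
  exists (mkposreal del hdel). intros h hn hh. simpl in hh.
  destruct (Hc h hh) as [hk hFk].
  set (k := f h - s) in *.
  assert (hk0 : k <> 0).
  { intros e. assert (f h = s) by (unfold k in e; lra). rewrite H, hF0 in hFk. auto. }
  assert (E := Hd2 k hk0 hk). replace (s + k) with (f h) in E by (unfold k; ring).
  rewrite hFk, hF0 in E. rewrite Rplus_0_l, hf0. fold k.
  set (r := (h - 0) / k) in *.
  assert (hr1 : Rabs (r - L) < L / 2) by (eapply Rlt_le_trans; [apply E|apply Rmin_l]).
  assert (hr2 : Rabs (r - L) < eps * L * L / 8) by (eapply Rlt_le_trans; [apply E|apply Rmin_r]).
  apply Rabs_def2 in hr1.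
  replace (k / h) with (/ r) by (unfold r; field; auto).
  eapply Rle_lt_trans; [apply (Rabs_inv_sub_le (L / 2) r L (eps * L * L / 8)); lra|].
  replace (eps * L * L / 8 / (L / 2 * (L / 2))) with (eps / 2) by (field; lra). lra.
Qed.

Lemma lt_Rmin x y z : z < Rmin x y -> z < x /\ z < y.
Proof. intros h; split; eapply Rlt_le_trans; eauto; [apply Rmin_l| apply Rmin_r]. Qed.

Lemma prod_dist_lt {A B : Type} (dA : A -> A -> R) (dB : B -> B -> R) u v r :
  prod_dist dA dB u v < r <-> dA (fst u) (fst v) < r /\ dB (snd u) (snd v) < r.
Proof. apply Rmax_Rlt. Qed.

Section Metric.
Context {S : Type} {d : S -> S -> R} (Hd : is_metric d).

Lemma metric_nonneg y z : 0 <= d y z.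
Proof. apply Hd. Qed.
Lemma metric_refl y : d y y = 0.
Proof. now apply Hd. Qed.
Lemma metric_eq0 y z : d y z = 0 -> y = z.
Proof. apply Hd. Qed.
Lemma metric_triangle y z w : d y w <= d y z + d z w.
Proof. apply Hd. Qed.

Lemma Xdist_refl q : Xdist d q q = 0.
Proof.
  unfold Xdist, prod_dist, absdist.
  rewrite Rminus_diag, Rabs_R0, metric_refl, Rmax_left; lra.
Qed.

Lemma Xdist_lt s y s' y' r : Xdist d (s, y) (s', y') < r <-> Rabs (s - s') < r /\ d y y' < r.
Proof. apply prod_dist_lt. Qed.

Lemma compact_segment_prod a b (K : S -> Prop) : is_compact d K ->
  is_compact (Xdist d) (fun q => a <= fst q <= b /\ K (snd q)).
Proof.
  intros hK I O hO hcov.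
  (* tube lemma: [l] covers [[a, b] × ball y r] *)
  set (tube := fun y (l : list I) r => 0 < r /\
    forall s y', a <= s <= b -> d y y' < r -> exists i, In i l /\ O i (s, y')).
  assert (htube : forall y, K y -> exists l r, tube y l r).
  { intros y hy.
    apply (real_induction a b (fun x => exists l r, 0 < r /\
      forall s y', a <= s <= x -> d y y' < r -> exists i, In i l /\ O i (s, y'))).
    - intros z hz. exists nil, 1. split; [lra|]. intros s y' hs. lra.
    - intros x hx. destruct (hcov (x, y) (conj hx hy)) as [i hi].
      destruct (hO i (x, y) hi) as [rho [hr Hr]].
      exists rho. split; [exact hr|]. intros y0 hy0 [l [r [hr0 Hl]]] z hz.
      exists (i :: l), (Rmin r rho). split; [now apply Rmin_glb_lt|].
      intros s y' hs hd'. apply lt_Rmin in hd' as [hdr hdrho].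
      destruct (Rle_dec s y0).
      + destruct (Hl s y') as [j [hj1 hj2]]; [lra| exact hdr|].
        exists j; split; [now right| exact hj2].
      + exists i. split; [now left|]. apply Hr, Xdist_lt. split; [apply Rabs_def1; lra| exact hdrho]. }
  set (O' := fun (j : S * list I * R) y' =>
    K (fst (fst j)) /\ tube (fst (fst j)) (snd (fst j)) (snd j) /\ d (fst (fst j)) y' < snd j).
  destruct (hK (S * list I * R)%type O') as [L HL].
  - intros [[y l] r] y' [hy [ht hd']]. simpl in *.
    exists (r - d y y'). split; [lra|]. intros y'' hy''. unfold O'; simpl.
    pose proof (metric_triangle y y' y''). split; [exact hy| split; [exact ht| lra]].
  - intros y hy. destruct (htube y hy) as [l [r ht]]. exists (y, l, r). unfold O'; simpl.
    rewrite metric_refl. split; [exact hy| split; [exact ht| apply ht]].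
  - exists (flat_map (fun j => snd (fst j)) L).
    intros [s y'] [hs hy']. simpl in *.
    destruct (HL y' hy') as [[[y l] r] [hj [_ [[_ ht] hd']]]]. simpl in *.
    destruct (ht s y' hs hd') as [i [hi1 hi2]].
    exists i. split; [|exact hi2]. apply in_flat_map. now exists (y, l, r).
Qed.

End Metric.

Section Flow.
Variables (S : Type) (d : S -> S -> R) (x0 : S) (W : R * S -> R).
Hypothesis Hd : is_metric d.
Hypothesis HW : is_continuous_on (Xdist d) absdist (fun _ => True) W.
Hypothesis HWp : W (0, x0) = 0.
Hypothesis HWpos : forall q, q <> (0, x0) -> 0 < W q.

Definition p : R * S := (0, x0).

Lemma W_nonneg q : 0 <= W q.
Proof. destruct (classic (q = p)) as [->|h]; [unfold p; lra| left; auto]. Qed.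

Lemma W_continuous_at u y eps : 0 < eps -> exists del, 0 < del /\ forall u' y',
  Rabs (u - u') < del -> d y y' < del -> Rabs (W (u, y) - W (u', y')) < eps.
Proof.
  intros he. destruct (HW (u, y) I eps he) as [del [hd H]].
  exists del; split; [exact hd|]. intros u' y' h1 h2.
  apply (H (u', y') I), Xdist_lt; auto.
Qed.

Lemma W_continuity_pt_fst u y : continuity_pt (fun v => W (v, y)) u.
Proof.
  intros eps he. destruct (W_continuous_at u y eps he) as [del [hd H]].
  exists del; split; [exact hd|]. intros v [_ hv]. simpl in *. unfold R_dist in *.
  rewrite Rabs_minus_sym. apply H; [now rewrite Rabs_minus_sym| now rewrite (metric_refl Hd)].
Qed.

Lemma W_pos_near u y : 0 < W (u, y) ->
  exists del, 0 < del /\ forall v, Rabs (v - u) < del -> 0 < W (v, y).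
Proof.
  intros h. destruct (W_continuous_at u y (W (u, y)) h) as [del [hd H]].
  exists del; split; [exact hd|]. intros v hv.
  assert (Rabs (W (u, y) - W (v, y)) < W (u, y)) as hw.
  { apply H; [now rewrite Rabs_minus_sym| now rewrite (metric_refl Hd)]. }
  apply Rabs_def2 in hw. lra.
Qed.

Definition pace (y : S) (u : R) : R := / W (u, y).
Definition transit (y : S) (a b : R) : R := RInt (pace y) a b.

Definition W_pos_on (y : S) (a b : R) : Prop :=
  forall u, Rmin a b <= u <= Rmax a b -> 0 < W (u, y).

Lemma pace_continuous y u : 0 < W (u, y) -> continuous (pace y) u.
Proof.
  intros h. apply continuity_pt_filterlim, (continuity_pt_inv (fun v => W (v, y))).
  - apply W_continuity_pt_fst.
  - lra.
Qed.

Lemma W_pos_on_sym y a b : W_pos_on y a b -> W_pos_on y b a.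
Proof. intros h u hu. apply h. now rewrite Rmin_comm, Rmax_comm. Qed.

Lemma W_pos_on_within y c e a b : W_pos_on y c e -> c <= a <= e -> c <= b <= e -> W_pos_on y a b.
Proof.
  intros h ha hb u hu. apply h.
  unfold Rmin, Rmax in *; destruct (Rle_dec c e), (Rle_dec a b); lra.
Qed.

Lemma W_pos_on_trans y a b c : W_pos_on y a b -> W_pos_on y b c -> W_pos_on y a c.
Proof.
  intros h1 h2 u hu.
  destruct (Rle_dec (Rmin a b) u), (Rle_dec u (Rmax a b)); [apply h1; lra|..];
    apply h2; unfold Rmin, Rmax in *;
    destruct (Rle_dec a b), (Rle_dec b c), (Rle_dec a c); lra.
Qed.

Lemma W_pos_on_off_axis y a b : y <> x0 -> W_pos_on y a b.
Proof. intros h u _. apply HWpos. intros e. now injection e. Qed.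

Lemma W_pos_on_pos y a b : 0 < a -> 0 < b -> W_pos_on y a b.
Proof.
  intros ha hb u hu. apply HWpos. intros e. injection e as -> _.
  unfold Rmin, Rmax in hu; destruct (Rle_dec a b); lra.
Qed.

Lemma W_pos_on_neg y a b : a < 0 -> b < 0 -> W_pos_on y a b.
Proof.
  intros ha hb u hu. apply HWpos. intros e. injection e as -> _.
  unfold Rmin, Rmax in hu; destruct (Rle_dec a b); lra.
Qed.

Lemma W_pos_on_self s y : (s, y) <> p -> W_pos_on y s s.
Proof.
  intros h u hu. rewrite Rmin_left, Rmax_left in hu by lra.
  replace u with s by lra. now apply HWpos.
Qed.

Lemma W_pos_on_axis a b : W_pos_on x0 a b -> (0 < a /\ 0 < b) \/ (a < 0 /\ b < 0).
Proof.
  intros h.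
  assert (h0 : ~ (Rmin a b <= 0 <= Rmax a b)) by (intros hu; specialize (h 0 hu); lra).
  unfold Rmin, Rmax in h0; destruct (Rle_dec a b); lra.
Qed.

Lemma W_pos_on_p b : ~ W_pos_on x0 0 b.
Proof. intros h. destruct (W_pos_on_axis 0 b h); lra. Qed.

Lemma W_pos_on_widen y a b : W_pos_on y a b ->
  exists eta, 0 < eta /\ W_pos_on y (Rmin a b - eta) (Rmax a b + eta).
Proof.
  intros h.
  assert (hab : Rmin a b <= Rmax a b) by (unfold Rmin, Rmax; destruct (Rle_dec a b); lra).
  destruct (W_pos_near (Rmin a b) y) as [d1 [hd1 H1]]; [apply h; lra|].
  destruct (W_pos_near (Rmax a b) y) as [d2 [hd2 H2]]; [apply h; lra|].
  assert (hm : 0 < Rmin d1 d2) by now apply Rmin_glb_lt.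
  exists (Rmin d1 d2 / 2). split; [lra|].
  pose proof (Rmin_l d1 d2); pose proof (Rmin_r d1 d2).
  intros u hu. rewrite Rmin_left, Rmax_right in hu by lra.
  destruct (Rlt_dec u (Rmin a b)); [apply H1, Rabs_def1; lra|].
  destruct (Rlt_dec (Rmax a b) u); [apply H2, Rabs_def1; lra|].
  apply h; lra.
Qed.

Lemma ex_RInt_pace y a b : W_pos_on y a b -> ex_RInt (pace y) a b.
Proof.
  intros h. apply (@ex_RInt_continuous R_CompleteNormedModule).
  intros z hz. now apply pace_continuous, h.
Qed.

Lemma transit_aa y a : transit y a a = 0.
Proof. unfold transit. now rewrite RInt_point. Qed.

Lemma transit_chasles y a b c : W_pos_on y a b -> W_pos_on y b c ->
  transit y a b + transit y b c = transit y a c.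
Proof. intros h1 h2. apply (RInt_Chasles (pace y)); now apply ex_RInt_pace. Qed.

Lemma transit_swap y a b : W_pos_on y a b -> transit y b a = - transit y a b.
Proof.
  intros h. pose proof (transit_chasles y a b a h (W_pos_on_sym _ _ _ h)).
  rewrite transit_aa in H. lra.
Qed.

Lemma transit_pos y a b : a < b -> W_pos_on y a b -> 0 < transit y a b.
Proof.
  intros hab h.
  assert (hu : forall x, a <= x <= b -> 0 < W (x, y))
    by (intros x hx; apply h; unfold Rmin, Rmax; destruct (Rle_dec a b); lra).
  replace 0 with (RInt (fun _ => 0) a b)
    by (rewrite RInt_const; unfold scal; simpl; unfold mult; simpl; ring).
  apply RInt_lt; [exact hab| | |].
  - intros x hx. now apply pace_continuous, hu.
  - intros x hx. apply continuous_const.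
  - intros x hx. apply Rinv_0_lt_compat, hu; lra.
Qed.

Lemma transit_nonneg y a b : a <= b -> W_pos_on y a b -> 0 <= transit y a b.
Proof.
  intros [h| ->] hp; [now left; apply transit_pos| rewrite transit_aa; lra].
Qed.

Lemma transit_sign y a b : W_pos_on y a b -> (a <= b <-> 0 <= transit y a b).
Proof.
  intros h. split; [intros; now apply transit_nonneg|].
  intros ht. destruct (Rle_dec a b) as [hab|hab]; [exact hab|].
  pose proof (transit_pos y b a ltac:(lra) (W_pos_on_sym _ _ _ h)).
  rewrite transit_swap in H by exact h. lra.
Qed.

Lemma transit_inj y s a b : W_pos_on y s a -> W_pos_on y s b ->
  transit y s a = transit y s b -> a = b.
Proof.
  intros h1 h2 e.
  assert (hab : W_pos_on y a b) by (apply (W_pos_on_trans _ _ s); [now apply W_pos_on_sym| exact h2]).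
  rewrite <- (transit_chasles y s a b h1 hab) in e.
  apply Rle_antisym.
  - apply (transit_sign y a b hab). lra.
  - apply (transit_sign y b a (W_pos_on_sym _ _ _ hab)). rewrite transit_swap by exact hab. lra.
Qed.

Lemma transit_deriv y a b : W_pos_on y a b -> derivable_pt_lim (transit y a) b (pace y b).
Proof.
  intros h. apply is_derive_Reals.
  assert (hb : 0 < W (b, y)) by (apply h; unfold Rmin, Rmax; destruct (Rle_dec a b); lra).
  destruct (W_pos_near b y hb) as [del [hd H]].
  apply (is_derive_RInt (V := R_NormedModule) (pace y) (transit y a) a b).
  - exists (mkposreal del hd). intros b0 hb0.
    apply (RInt_correct (V := R_CompleteNormedModule)), ex_RInt_pace.
    apply (W_pos_on_trans _ _ b); [exact h|]. intros u hu.
    assert (Rabs (b0 - b) < del) as hdb by apply hb0.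
    apply H. unfold Rmin, Rmax in hu. apply Rabs_def2 in hdb.
    apply Rabs_def1; destruct (Rle_dec b b0); lra.
  - now apply pace_continuous.
Qed.

Lemma transit_continuity_pt y a b : W_pos_on y a b -> continuity_pt (transit y a) b.
Proof. intros h. apply derivable_continuous_pt. exists (pace y b). now apply transit_deriv. Qed.

Lemma transit_IVT y s u1 u2 v : W_pos_on y s u1 -> W_pos_on y s u2 -> u1 <= u2 ->
  transit y s u1 <= v <= transit y s u2 ->
  exists sg, u1 <= sg <= u2 /\ W_pos_on y s sg /\ transit y s sg = v.
Proof.
  intros h1 h2 hu hv.
  assert (hpos : forall x, u1 <= x <= u2 -> W_pos_on y s x).
  { intros x hx. apply (W_pos_on_trans _ _ u1); [exact h1|].
    apply (W_pos_on_within _ u1 u2); [apply (W_pos_on_trans _ _ s); [now apply W_pos_on_sym| exact h2]| lra| lra]. }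
  destruct (IVT_le (transit y s) u1 u2 v) as [x [hx e]]; [exact hu| |exact hv|].
  - intros x hx. now apply transit_continuity_pt, hpos.
  - exists x. auto.
Qed.


Lemma W_lower_bound_near y c e : W_pos_on y c e -> exists del m, 0 < del /\ 0 < m /\
  forall u y', c <= u <= e -> d y y' < del -> m <= W (u, y').
Proof.
  intros hp.
  apply (real_induction c e (fun x => exists del m, 0 < del /\ 0 < m /\
     forall u y', c <= u <= x -> d y y' < del -> m <= W (u, y'))).
  - intros z hz. exists 1, 1. repeat split; try lra. intros u y' hu; lra.
  - intros x hx.
    assert (hw : 0 < W (x, y)) by (apply hp; unfold Rmin, Rmax; destruct (Rle_dec c e); lra).
    destruct (W_continuous_at x y (W (x, y) / 2)) as [rho [hr H]]; [lra|].
    exists rho; split; [exact hr|]. intros y0 hy0 [del [m [hd [hm Hm]]]] z hz.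
    exists (Rmin del rho), (Rmin m (W (x, y) / 2)).
    split; [now apply Rmin_glb_lt|]. split; [apply Rmin_glb_lt; lra|].
    intros u y' hu [hdel hrho]%lt_Rmin.
    destruct (Rle_dec u y0).
    + eapply Rle_trans; [apply Rmin_l| apply Hm; auto; lra].
    + eapply Rle_trans; [apply Rmin_r|].
      assert (Rabs (W (x, y) - W (u, y')) < W (x, y) / 2) as hw' by (apply H; auto; apply Rabs_def1; lra).
      apply Rabs_def2 in hw'. lra.
Qed.

Lemma W_uniformly_near y c e eta : 0 < eta -> exists del, 0 < del /\
  forall u y', c <= u <= e -> d y y' < del -> Rabs (W (u, y') - W (u, y)) < eta.
Proof.
  intros he.
  apply (real_induction c e (fun x => exists del, 0 < del /\
     forall u y', c <= u <= x -> d y y' < del -> Rabs (W (u, y') - W (u, y)) < eta)).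
  - intros z hz. exists 1. split; [lra|]. intros u y' hu; lra.
  - intros x hx.
    destruct (W_continuous_at x y (eta / 2)) as [rho [hr H]]; [lra|].
    exists rho; split; [exact hr|]. intros y0 hy0 [del [hd Hm]] z hz.
    exists (Rmin del rho). split; [now apply Rmin_glb_lt|].
    intros u y' hu [hdel hrho]%lt_Rmin.
    destruct (Rle_dec u y0); [apply Hm; auto; lra|].
    assert (hxu : Rabs (x - u) < rho) by (apply Rabs_def1; lra).
    assert (h1 : Rabs (W (x, y) - W (u, y')) < eta / 2) by (apply H; auto).
    assert (h2 : Rabs (W (x, y) - W (u, y)) < eta / 2) by (apply H; auto; now rewrite (metric_refl Hd)).
    apply Rabs_def2 in h1. apply Rabs_def2 in h2. apply Rabs_def1; lra.
Qed.

Lemma transit_diff_le y y' a b m eta : a <= b -> 0 < m ->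
  (forall u, a <= u <= b -> m <= W (u, y) /\ m <= W (u, y') /\ Rabs (W (u, y') - W (u, y)) < eta) ->
  Rabs (transit y' a b - transit y a b) <= (b - a) * (eta / (m * m)).
Proof.
  intros hab hm H.
  assert (hp : forall z, (forall u, a <= u <= b -> m <= W (u, z)) -> W_pos_on z a b).
  { intros z hz u hu. rewrite Rmin_left, Rmax_right in hu by exact hab.
    apply Rlt_le_trans with m; auto. }
  assert (hy : W_pos_on y a b) by (apply hp; intros u hu; apply (H u hu)).
  assert (hy' : W_pos_on y' a b) by (apply hp; intros u hu; apply (H u hu)).
  unfold transit. rewrite <- (RInt_minus (V := R_CompleteNormedModule)) by now apply ex_RInt_pace.
  apply abs_RInt_le_const; [exact hab| apply (ex_RInt_minus (V := R_NormedModule)); now apply ex_RInt_pace|].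
  intros u hu. destruct (H u hu) as [h1 [h2 h3]]. unfold pace. now apply Rabs_inv_sub_le.
Qed.

Lemma transit_uniformly_near y c e : c <= e -> W_pos_on y c e ->
  forall eps, 0 < eps -> exists del, 0 < del /\ forall y', d y y' < del ->
    W_pos_on y' c e /\ forall a b, c <= a <= e -> c <= b <= e ->
      Rabs (transit y' a b - transit y a b) < eps.
Proof.
  intros hce hp eps heps.
  destruct (W_lower_bound_near y c e hp) as [d1 [m [hd1 [hm H1]]]].
  set (eta := eps * (m * m) / (e - c + 1)).
  assert (heta : 0 < eta) by (unfold eta; apply Rdiv_lt_0_compat; [|lra];
    apply Rmult_lt_0_compat; [lra| now apply Rmult_lt_0_compat]).
  destruct (W_uniformly_near y c e eta heta) as [d2 [hd2 H2]].
  exists (Rmin d1 d2). split; [now apply Rmin_glb_lt|].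
  intros y' [hy1 hy2]%lt_Rmin.
  assert (hyy : d y y < d1) by now rewrite (metric_refl Hd).
  assert (hp' : W_pos_on y' c e).
  { intros u hu. rewrite Rmin_left, Rmax_right in hu by lra. apply Rlt_le_trans with m; auto. }
  split; [exact hp'|].
  assert (key : forall a b, c <= a <= e -> c <= b <= e -> a <= b ->
    Rabs (transit y' a b - transit y a b) < eps).
  { intros a b ha hb hab.
    eapply Rle_lt_trans; [apply (transit_diff_le y y' a b m eta hab hm)|].
    - intros u hu. split; [|split]; [apply H1| apply H1| apply H2]; auto; lra.
    - replace ((b - a) * (eta / (m * m))) with (eps * (b - a) / (e - c + 1)) by (unfold eta; field; split; lra).
      apply (Rmult_lt_reg_r (e - c + 1)); [lra|].
      unfold Rdiv. rewrite Rmult_assoc, Rinv_l by lra. nra. }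
  intros a b ha hb. destruct (Rle_dec a b); [now apply key|].
  rewrite (transit_swap y' b a), (transit_swap y b a) by (apply (W_pos_on_within _ c e); auto; lra).
  replace (- transit y' b a - - transit y b a) with (- (transit y' b a - transit y b a)) by ring.
  rewrite Rabs_Ropp. apply key; auto; lra.
Qed.

Lemma transit_jointly_near y c e s : c < s < e -> W_pos_on y c e -> forall eps, 0 < eps ->
  exists del, 0 < del /\ forall s' y', Rabs (s' - s) < del -> d y y' < del ->
    c <= s' <= e /\ W_pos_on y' c e /\
    forall u, c <= u <= e -> Rabs (transit y' s' u - transit y s u) < eps.
Proof.
  intros hs hp eps he.
  destruct (transit_uniformly_near y c e ltac:(lra) hp (eps / 2) ltac:(lra)) as [del1 [hd1 H1]].
  assert (hss : W_pos_on y s s) by (apply (W_pos_on_within y c e); auto; lra).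
  destruct (proj1 (continuity_pt_locally _ _) (transit_continuity_pt y s s hss)
    (mkposreal (eps / 2) ltac:(lra))) as [del2 H2].
  exists (Rmin (Rmin del1 del2) (Rmin (s - c) (e - s))).
  split; [repeat apply Rmin_glb_lt; try lra; apply cond_pos|].
  intros s' y' [[_ hs2]%lt_Rmin [hs3 hs4]%lt_Rmin]%lt_Rmin [[hy _]%lt_Rmin _]%lt_Rmin.
  assert (hs' : c <= s' <= e) by (apply Rabs_def2 in hs3; apply Rabs_def2 in hs4; lra).
  destruct (H1 y' hy) as [hp' H1']. split; [exact hs'|]. split; [exact hp'|].
  intros u hu.
  assert (C : transit y s s' + transit y s' u = transit y s u)
    by (apply transit_chasles; apply (W_pos_on_within y c e); auto; lra).
  specialize (H1' s' u hs' hu). specialize (H2 s' hs2). simpl in H2. rewrite transit_aa in H2.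
  apply Rabs_def2 in H1'. apply Rabs_def2 in H2. apply Rabs_def1; lra.
Qed.

(* The new solution is bracketed between [sg - et] and [sg + et] by the strict monotonicity
   of [transit] in its last argument and its continuity in the others. *)
Lemma transit_solution_near y s sg : W_pos_on y s sg -> forall eps, 0 < eps ->
  exists del, 0 < del /\ forall t' s' y',
    Rabs (t' - transit y s sg) < del -> Rabs (s' - s) < del -> d y y' < del ->
    exists sg', Rabs (sg' - sg) < eps /\ W_pos_on y' s' sg' /\ transit y' s' sg' = t'.
Proof.
  intros h eps heps.
  destruct (W_pos_on_widen y s sg h) as [eta [heta hw]].
  set (c := Rmin s sg - eta) in hw. set (e := Rmax s sg + eta) in hw.
  assert (hmm : Rmin s sg <= s <= Rmax s sg /\ Rmin s sg <= sg <= Rmax s sg)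
    by (unfold Rmin, Rmax; destruct (Rle_dec s sg); lra).
  set (et := Rmin eta (eps / 2)).
  assert (het : 0 < et /\ et <= eta /\ et <= eps / 2)
    by (split; [apply Rmin_glb_lt; lra| split; [apply Rmin_l| apply Rmin_r]]).
  set (u1 := sg - et). set (u2 := sg + et).
  assert (hu : c <= u1 <= e /\ c <= u2 <= e /\ c <= sg <= e /\ c < s < e) by (unfold c, e, u1, u2; lra).
  assert (hp : forall a b, c <= a <= e -> c <= b <= e -> W_pos_on y a b)
    by (intros; now apply (W_pos_on_within y c e)).
  set (m1 := transit y sg u2). set (m2 := transit y u1 sg).
  assert (hm1 : 0 < m1) by (apply transit_pos; [unfold u2; lra| apply hp; lra]).
  assert (hm2 : 0 < m2) by (apply transit_pos; [unfold u1; lra| apply hp; lra]).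
  set (mu := Rmin m1 m2 / 2).
  assert (hmu : 0 < mu /\ 2 * mu <= m1 /\ 2 * mu <= m2) by (unfold mu, Rmin; destruct (Rle_dec m1 m2); lra).
  destruct (transit_jointly_near y c e s ltac:(lra) hw mu ltac:(lra)) as [del [hdel H]].
  exists (Rmin del mu). split; [apply Rmin_glb_lt; lra|].
  intros t' s' y' [_ ht]%lt_Rmin [hs _]%lt_Rmin [hy _]%lt_Rmin.
  destruct (H s' y' hs hy) as [hs' [hw' H']].
  assert (A1 := H' u1 ltac:(lra)). assert (A2 := H' u2 ltac:(lra)).
  assert (E1 : transit y s sg + m1 = transit y s u2) by (apply transit_chasles; apply hp; lra).
  assert (E2 : transit y s u1 + m2 = transit y s sg) by (apply transit_chasles; apply hp; lra).
  apply Rabs_def2 in A1. apply Rabs_def2 in A2. apply Rabs_def2 in ht.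
  destruct (transit_IVT y' s' u1 u2 t') as [sg' [hsg' [hpos' hT']]];
    [apply (W_pos_on_within y' c e); auto; lra.. | unfold u1, u2; lra| lra|].
  exists sg'. split; [apply Rabs_def1; unfold u1, u2 in hsg'; lra| auto].
Qed.

Hypothesis Hdiv_r : forall M, exists a, 0 < a < 1 /\ M < transit x0 a 1.
Hypothesis Hdiv_l : forall M, exists b, -1 < b < 0 /\ M < transit x0 (-1) b.

Lemma transit_unbounded_right M c : 0 < c < 1 -> exists a, 0 < a < c /\ M < transit x0 a c.
Proof.
  intros hc. destruct (Hdiv_r (Rabs M + transit x0 c 1)) as [a [ha hM]].
  pose proof (Rle_abs M). pose proof (Rabs_pos M).
  destruct (Rlt_dec a c) as [h|h].
  - exists a. split; [lra|].
    rewrite <- (transit_chasles x0 a c 1) in hM by (apply W_pos_on_pos; lra). lra.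
  - rewrite <- (transit_chasles x0 c a 1) in hM by (apply W_pos_on_pos; lra).
    assert (0 <= transit x0 c a) by (apply transit_nonneg; [lra| apply W_pos_on_pos; lra]). lra.
Qed.

Lemma transit_unbounded_left M c : -1 < c < 0 -> exists b, c < b < 0 /\ M < transit x0 c b.
Proof.
  intros hc. destruct (Hdiv_l (Rabs M + transit x0 (-1) c)) as [b [hb hM]].
  pose proof (Rle_abs M). pose proof (Rabs_pos M).
  destruct (Rlt_dec c b) as [h|h].
  - exists b. split; [lra|].
    rewrite <- (transit_chasles x0 (-1) c b) in hM by (apply W_pos_on_neg; lra). lra.
  - rewrite <- (transit_chasles x0 (-1) b c) in hM by (apply W_pos_on_neg; lra).
    assert (0 <= transit x0 b c) by (apply transit_nonneg; [lra| apply W_pos_on_neg; lra]). lra.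
Qed.

Lemma neq_p_on_axis s y : (s, y) <> p -> y = x0 -> s <> 0.
Proof. intros h -> ->. now apply h. Qed.

Lemma transit_reaches_forward T0 eps : 0 < eps < 1 -> exists del, 0 < del /\ forall y' s',
  d x0 y' < del -> Rabs s' < del -> (s', y') <> p ->
  exists u, s' <= u <= eps /\ W_pos_on y' s' u /\ T0 <= transit y' s' u.
Proof.
  intros he. destruct (transit_unbounded_right (T0 + 1) eps he) as [a [ha hT]].
  destruct (transit_uniformly_near x0 a eps ltac:(lra) (W_pos_on_pos x0 a eps ltac:(lra) ltac:(lra))
    (1 / 2) ltac:(lra)) as [d1 [hd1 H1]].
  exists (Rmin d1 (Rmin a (1 / 2))). split; [repeat apply Rmin_glb_lt; lra|].
  intros y' s' [hy _]%lt_Rmin [_ [hs1 hs2]%lt_Rmin]%lt_Rmin hq.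
  apply Rabs_def2 in hs1. apply Rabs_def2 in hs2.
  destruct (H1 y' hy) as [hp' H1'].
  assert (A : Rabs (transit y' a eps - transit x0 a eps) < 1 / 2) by (apply H1'; lra).
  apply Rabs_def2 in A.
  destruct (classic (y' = x0 /\ s' < 0)) as [[-> hs]|hno].
  - destruct (transit_unbounded_left T0 s') as [b [hb hTb]]; [lra|].
    exists b. split; [lra|]. split; [apply W_pos_on_neg; lra| lra].
  - assert (hs : W_pos_on y' s' eps).
    { destruct (classic (y' = x0)) as [->|hne]; [|now apply W_pos_on_off_axis].
      apply W_pos_on_pos; [|lra].
      destruct (Rtotal_order s' 0) as [h|[h|h]]; [exfalso; now apply hno| |exact h].
      exfalso; exact (neq_p_on_axis s' x0 hq eq_refl h). }
    exists eps. split; [lra|]. split; [exact hs|].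
    rewrite <- (transit_chasles y' s' a eps) by (apply (W_pos_on_within y' s' eps _ _ hs); lra).
    assert (0 <= transit y' s' a) by (apply transit_nonneg; [lra|]; apply (W_pos_on_within y' s' eps _ _ hs); lra).
    lra.
Qed.

Lemma transit_reaches_backward T0 eps : 0 < eps < 1 -> exists del, 0 < del /\ forall y' s',
  d x0 y' < del -> Rabs s' < del -> (s', y') <> p ->
  exists u, - eps <= u <= s' /\ W_pos_on y' s' u /\ transit y' s' u <= - T0.
Proof.
  intros he. destruct (transit_unbounded_left (T0 + 1) (- eps)) as [b [hb hT]]; [lra|].
  destruct (transit_uniformly_near x0 (- eps) b ltac:(lra) (W_pos_on_neg x0 (- eps) b ltac:(lra) ltac:(lra))
    (1 / 2) ltac:(lra)) as [d1 [hd1 H1]].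
  exists (Rmin d1 (Rmin (- b) (1 / 2))). split; [repeat apply Rmin_glb_lt; lra|].
  intros y' s' [hy _]%lt_Rmin [_ [hs1 hs2]%lt_Rmin]%lt_Rmin hq.
  apply Rabs_def2 in hs1. apply Rabs_def2 in hs2.
  destruct (H1 y' hy) as [hp' H1'].
  assert (A : Rabs (transit y' (- eps) b - transit x0 (- eps) b) < 1 / 2) by (apply H1'; lra).
  apply Rabs_def2 in A.
  destruct (classic (y' = x0 /\ 0 < s')) as [[-> hs]|hno].
  - destruct (transit_unbounded_right T0 s') as [a [ha hTa]]; [lra|].
    exists a. split; [lra|]. split; [apply W_pos_on_pos; lra|].
    rewrite transit_swap by (apply W_pos_on_pos; lra). lra.
  - assert (hs : W_pos_on y' (- eps) s').
    { destruct (classic (y' = x0)) as [->|hne]; [|now apply W_pos_on_off_axis].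
      apply W_pos_on_neg; [lra|].
      destruct (Rtotal_order s' 0) as [h|[h|h]]; [exact h| |exfalso; now apply hno].
      exfalso; exact (neq_p_on_axis s' x0 hq eq_refl h). }
    exists (- eps). split; [lra|]. split; [now apply W_pos_on_sym|].
    rewrite transit_swap by exact hs.
    rewrite <- (transit_chasles y' (- eps) b s') by (apply (W_pos_on_within y' (- eps) s' _ _ hs); lra).
    assert (0 <= transit y' b s') by (apply transit_nonneg; [lra|]; apply (W_pos_on_within y' (- eps) s' _ _ hs); lra).
    lra.
Qed.

(* The same continuity at [p] itself, where the flow is at rest: near [p] every time
   is reached within distance [eps], thanks to the divergence of [transit] at [0]. *)
Lemma transit_solution_near_p T0 eps : 0 < eps < 1 -> exists del, 0 < del /\ forall t' s' y',
  Rabs t' < T0 -> Rabs s' < del -> d x0 y' < del -> (s', y') <> p ->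
  exists sg', Rabs sg' <= eps /\ W_pos_on y' s' sg' /\ transit y' s' sg' = t'.
Proof.
  intros he.
  destruct (transit_reaches_forward T0 eps he) as [d1 [hd1 H1]].
  destruct (transit_reaches_backward T0 eps he) as [d2 [hd2 H2]].
  exists (Rmin d1 d2). split; [now apply Rmin_glb_lt|].
  intros t' s' y' ht [hs1 hs2]%lt_Rmin [hy1 hy2]%lt_Rmin hq.
  destruct (H1 y' s' hy1 hs1 hq) as [u2 [hu2 [hp2 hT2]]].
  destruct (H2 y' s' hy2 hs2 hq) as [u1 [hu1 [hp1 hT1]]].
  apply Rabs_def2 in ht.
  destruct (transit_IVT y' s' u1 u2 t') as [sg [hsg [hp hT]]]; [auto| auto| lra| lra|].
  exists sg. split; [apply Rabs_le; lra| auto].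
Qed.


(* [flow t (s, y)] is [(sg, y)] for the unique [sg] with [transit y s sg = t]; the point
   [p] and pairs [(t, q)] outside the domain are left fixed. *)
Definition flow_dom (t : R) (q : R * S) : Prop :=
  q = p \/ exists sg, W_pos_on (snd q) (fst q) sg /\ transit (snd q) (fst q) sg = t.

Definition flow_fst (t : R) (q : R * S) : R :=
  match excluded_middle_informative
    (exists sg, W_pos_on (snd q) (fst q) sg /\ transit (snd q) (fst q) sg = t) with
  | left H => proj1_sig (constructive_indefinite_description _ H)
  | right _ => fst q
  end.

Definition flow (t : R) (q : R * S) : R * S := (flow_fst t q, snd q).

Lemma flow_fst_eq t s y sg : W_pos_on y s sg -> transit y s sg = t -> flow_fst t (s, y) = sg.
Proof.
  intros h1 h2. unfold flow_fst. destruct (excluded_middle_informative _) as [H|H].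
  - destruct (constructive_indefinite_description _ H) as [x [hx1 hx2]]. simpl in *.
    apply (transit_inj y s); [exact hx1| exact h1| congruence].
  - exfalso; apply H; exists sg; auto.
Qed.

Lemma flow_dom_spec t s y : flow_dom t (s, y) -> (s, y) <> p ->
  W_pos_on y s (flow_fst t (s, y)) /\ transit y s (flow_fst t (s, y)) = t.
Proof.
  intros [h|[sg [h1 h2]]] hn; [contradiction|]. simpl in *.
  now rewrite (flow_fst_eq t s y sg).
Qed.

Lemma flow_p t : flow t p = p.
Proof.
  unfold flow, flow_fst. destruct (excluded_middle_informative _) as [H|H]; [|reflexivity].
  exfalso. destruct H as [sg [h _]]. exact (W_pos_on_p sg h).
Qed.

Lemma W_pos_on_not_p y s sg : W_pos_on y s sg -> (sg, y) <> p.
Proof. intros h e. injection e as -> ->. exact (W_pos_on_p s (W_pos_on_sym _ _ _ h)). Qed.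

Lemma flow_near t q : flow_dom t q -> forall eps, 0 < eps -> exists del, 0 < del /\
  forall t' q', Rabs (t - t') < del -> Xdist d q q' < del ->
    flow_dom t' q' /\ Xdist d (flow t q) (flow t' q') < eps.
Proof.
  intros hG eps he. destruct q as [s y].
  destruct (classic ((s, y) = p)) as [e|ne].
  - injection e as -> ->.
    destruct (transit_solution_near_p (Rabs t + 1) (Rmin (eps / 2) (1 / 2))) as [del [hd H]].
    { split; [apply Rmin_glb_lt; lra| eapply Rle_lt_trans; [apply Rmin_r| lra]]. }
    exists (Rmin del (Rmin 1 eps)). split; [repeat apply Rmin_glb_lt; lra|].
    intros t' [s' y'] [_ [ht _]%lt_Rmin]%lt_Rmin [[hs _]%lt_Rmin [hy [_ hye]%lt_Rmin]%lt_Rmin]%Xdist_lt.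
    fold p. rewrite flow_p.
    destruct (classic ((s', y') = p)) as [e'|ne'].
    + rewrite e', flow_p, (Xdist_refl Hd). split; [now left| exact he].
    + rewrite Rminus_0_l, Rabs_Ropp in hs.
      destruct (H t' s' y') as [sg [hsg [hp hT]]]; [|exact hs| exact hy| exact ne'|].
      { apply Rabs_def2 in ht. pose proof (Rle_abs t). pose proof (Rle_abs (- t)).
        rewrite Rabs_Ropp in *. apply Rabs_def1; lra. }
      split; [right; now exists sg|].
      unfold flow. rewrite (flow_fst_eq t' s' y' sg hp hT). apply Xdist_lt. split; [|exact hye].
      rewrite Rminus_0_l, Rabs_Ropp. eapply Rle_lt_trans; [exact hsg|].
      eapply Rle_lt_trans; [apply Rmin_l| lra].
  - destruct (flow_dom_spec t s y hG ne) as [hp hT].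
    destruct (transit_solution_near y s (flow_fst t (s, y)) hp eps he) as [del [hd H]].
    exists (Rmin del eps). split; [now apply Rmin_glb_lt|].
    intros t' [s' y'] [ht _]%lt_Rmin [[hs _]%lt_Rmin [hy hye]%lt_Rmin]%Xdist_lt.
    destruct (H t' s' y') as [sg' [hsg [hp' hT']]];
      [rewrite hT, Rabs_minus_sym; exact ht| rewrite Rabs_minus_sym; exact hs| exact hy|].
    split; [right; now exists sg'|].
    unfold flow. rewrite (flow_fst_eq t' s' y' sg' hp' hT'). apply Xdist_lt.
    split; [rewrite Rabs_minus_sym; exact hsg| exact hye].
Qed.


Lemma flow_dom_0 q : flow_dom 0 q.
Proof.
  destruct q as [s y]. destruct (classic ((s, y) = p)) as [e|ne]; [now left|].
  right. exists s. split; [now apply W_pos_on_self| apply transit_aa].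
Qed.

Lemma flow_0 q : flow 0 q = q.
Proof.
  destruct q as [s y]. destruct (classic ((s, y) = p)) as [->|ne]; [apply flow_p|].
  unfold flow. now rewrite (flow_fst_eq 0 s y s (W_pos_on_self s y ne) (transit_aa y s)).
Qed.

Lemma flow_dom_interval q t s : flow_dom t q -> (0 <= s <= t \/ t <= s <= 0) -> flow_dom s q.
Proof.
  intros hG hs. destruct q as [s0 y].
  destruct (classic ((s0, y) = p)) as [e|ne]; [now left|].
  destruct (flow_dom_spec t s0 y hG ne) as [hp hT]. set (sg := flow_fst t (s0, y)) in *.
  assert (h0 : W_pos_on y s0 s0) by now apply W_pos_on_self.
  right. simpl. destruct (Rle_dec s0 sg) as [h|h].
  - assert (0 <= t) by (rewrite <- hT; now apply (transit_sign y s0 sg hp)).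
    destruct (transit_IVT y s0 s0 sg s) as [x [_ hx]]; [auto..| rewrite transit_aa; lra|].
    now exists x.
  - assert (t < 0) by (rewrite <- hT; apply Rnot_le_lt; intros ht; apply h; now apply (transit_sign y s0 sg hp)).
    destruct (transit_IVT y s0 sg s0 s) as [x [_ hx]]; [auto..| lra| rewrite transit_aa; lra|].
    now exists x.
Qed.

Lemma flow_dom_shift q t : flow_dom t q -> forall s, flow_dom s (flow t q) <-> flow_dom (s + t) q.
Proof.
  intros hG s. destruct q as [s0 y].
  destruct (classic ((s0, y) = p)) as [e|ne].
  { rewrite e, flow_p. split; intros; now left. }
  destruct (flow_dom_spec t s0 y hG ne) as [hp hT]. set (sg := flow_fst t (s0, y)) in *.
  unfold flow. fold sg. simpl. split.
  - intros [e|[tau [h1 h2]]]; [exfalso; exact (W_pos_on_not_p y s0 sg hp e)|].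
    right. exists tau. simpl in *. split; [exact (W_pos_on_trans _ _ _ _ hp h1)|].
    rewrite <- (transit_chasles y s0 sg tau hp h1). lra.
  - intros [e|[tau [h1 h2]]]; [contradiction|].
    right. exists tau. simpl in *.
    assert (h3 : W_pos_on y sg tau) by exact (W_pos_on_trans _ _ _ _ (W_pos_on_sym _ _ _ hp) h1).
    split; [exact h3|]. rewrite <- (transit_chasles y s0 sg tau hp h3) in h2. lra.
Qed.

Lemma flow_comp q t s : flow_dom t q -> flow_dom s (flow t q) -> flow s (flow t q) = flow (s + t) q.
Proof.
  intros hG hG2. destruct q as [s0 y].
  destruct (classic ((s0, y) = p)) as [e|ne]; [now rewrite e, !flow_p|].
  destruct (flow_dom_spec t s0 y hG ne) as [hp hT]. set (sg := flow_fst t (s0, y)) in *.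
  change (flow t (s0, y)) with (sg, y) in *.
  destruct (flow_dom_spec s sg y hG2 (W_pos_on_not_p y s0 sg hp)) as [hp2 hT2].
  unfold flow. simpl. f_equal. symmetry. apply flow_fst_eq; [exact (W_pos_on_trans _ _ _ _ hp hp2)|].
  rewrite <- (transit_chasles y s0 sg _ hp hp2). lra.
Qed.

Lemma flow_partial_flow : partial_flow (Xdist d) flow_dom flow.
Proof.
  split; [|split; [|split; [|split; [|split; [|split]]]]].
  - intros [t q] hG. destruct (flow_near t q hG 1 ltac:(lra)) as [del [hd H]].
    exists del. split; [exact hd|]. intros [t' q'] [h1 h2]%prod_dist_lt. now apply H.
  - intros [t q] hG eps he. destruct (flow_near t q hG eps he) as [del [hd H]].
    exists del. split; [exact hd|]. intros [t' q'] _ [h1 h2]%prod_dist_lt. now apply H.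
  - exact flow_dom_0.
  - exact flow_dom_interval.
  - exact flow_dom_shift.
  - exact flow_0.
  - exact flow_comp.
Qed.

Lemma flow_deriv q : derivable_pt_lim (fun t => fst (flow t q)) 0 (W q).
Proof.
  destruct (classic (q = p)) as [->|ne].
  - apply is_derive_Reals. unfold p at 2. rewrite HWp.
    apply (is_derive_ext (fun _ => 0)); [intros t; now rewrite flow_p|].
    apply (is_derive_const (V := R_NormedModule)).
  - destruct q as [s y].
    assert (hs := W_pos_on_self s y ne).
    replace (W (s, y)) with (/ pace y s) by (unfold pace; now rewrite Rinv_inv).
    apply (derivable_pt_lim_local_inverse (transit y s) _ s).
    + apply Rinv_0_lt_compat, HWpos, ne.
    + now apply transit_deriv.
    + apply transit_aa.
    + apply flow_fst_eq; [exact hs| apply transit_aa].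
    + intros eps he. destruct (transit_solution_near y s s hs eps he) as [del [hd H]].
      exists del; split; [exact hd|]. intros t ht.
      destruct (H t s y) as [sg [h1 [h2 h3]]];
        [now rewrite transit_aa, Rminus_0_r| now rewrite Rminus_diag, Rabs_R0| now rewrite (metric_refl Hd)|].
      simpl. now rewrite (flow_fst_eq t s y sg).
Qed.


Lemma flow_isolated (K : S -> Prop) : is_compact d K -> is_nbhd d K x0 ->
  isolated_point (Xdist d) flow_dom flow p.
Proof.
  intros hK [U [hU [hU0 hUK]]].
  exists (fun q => -1 <= fst q <= 1 /\ K (snd q)).
  split; [now apply (compact_segment_prod Hd)|]. split.
  - exists (fun q => Rabs (fst q) < 1 /\ U (snd q)). split; [|split].
    + intros [s y] [hs hy]. destruct (hU y hy) as [r0 [hr0 Hr0]].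
      exists (Rmin r0 (1 - Rabs s)). split; [apply Rmin_glb_lt; simpl in hs; lra|].
      intros [s' y'] [[_ h1]%lt_Rmin [h2 _]%lt_Rmin]%Xdist_lt. simpl in *. split; [|now apply Hr0].
      pose proof (Rabs_triang_inv s' s). rewrite Rabs_minus_sym in h1. lra.
    + simpl. rewrite Rabs_R0. split; [lra| exact hU0].
    + intros [s y] [hs hy]. simpl in hs. apply Rabs_def2 in hs. split; [simpl; lra| now apply hUK].
  - intros [s y] H. apply NNPP. intros ne.
    (* the trajectory leaves [[-1, 1] × K] by reaching first coordinate 2 or -2 *)
    assert (hsg : exists sg, (sg = 2 \/ sg = -2) /\ W_pos_on y s sg).
    { destruct (classic (W_pos_on y s 2)) as [h|h]; [exists 2; auto|].
      exists (-2). split; [now right|].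
      destruct (classic (y = x0)) as [->|hne]; [|now apply W_pos_on_off_axis].
      apply W_pos_on_neg; [|lra].
      destruct (Rtotal_order s 0) as [hs|[hs|hs]]; [exact hs| |exfalso; apply h, W_pos_on_pos; lra].
      exfalso; exact (neq_p_on_axis s x0 ne eq_refl hs). }
    destruct hsg as [sg [hsg hp]].
    destruct (H (transit y s sg)) as [h1 _]; [right; now exists sg|].
    unfold flow in h1. simpl in h1. rewrite (flow_fst_eq _ s y sg hp eq_refl) in h1. lra.
Qed.

Lemma Xdist_flow_p t q :
  Rabs (flow_fst t q) <= Xdist d (flow t q) p /\ d (snd q) x0 <= Xdist d (flow t q) p.
Proof.
  unfold Xdist, prod_dist, absdist, flow, p. simpl. rewrite Rminus_0_r.
  split; [apply Rmax_l| apply Rmax_r].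
Qed.

Lemma flow_fst_sign t s y : flow_dom t (s, y) -> (s, y) <> p -> (0 <= t <-> s <= flow_fst t (s, y)).
Proof.
  intros hG ne. destruct (flow_dom_spec t s y hG ne) as [hp hT].
  pose proof (transit_sign y s _ hp) as h. rewrite hT in h. tauto.
Qed.

Lemma flow_approaching_p_on_axis s y : (forall eps, 0 < eps -> exists t, Xdist d (flow t (s, y)) p < eps) ->
  y = x0.
Proof.
  intros H. apply (metric_eq0 Hd). destruct (metric_nonneg Hd y x0) as [h|h]; [|now symmetry].
  destruct (H _ h) as [t ht]. destruct (Xdist_flow_p t (s, y)) as [_ h']. simpl in h'. lra.
Qed.

Lemma tends_fwd_p q : q <> p -> tends_fwd (Xdist d) flow_dom flow q p -> exists s, s < 0 /\ q = (s, x0).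
Proof.
  intros ne [hG hT]. destruct q as [s y].
  assert (y = x0) as ->.
  { apply (flow_approaching_p_on_axis s). intros eps he.
    destruct (hT eps he) as [T0 H]. exists T0. apply H; lra. }
  exists s. split; [|reflexivity].
  destruct (Rtotal_order s 0) as [hs|[hs|hs]]; [exact hs| exfalso; exact (neq_p_on_axis s x0 ne eq_refl hs)|].
  exfalso. destruct (hT s hs) as [T0 H].
  set (t := Rmax T0 0).
  assert (h1 : s <= flow_fst t (s, x0)) by (apply (flow_fst_sign t s x0); [apply hG, Rmax_r| exact ne| apply Rmax_r]).
  specialize (H t (Rmax_l _ _)). destruct (Xdist_flow_p t (s, x0)) as [h2 _].
  rewrite Rabs_right in h2 by lra. lra.
Qed.

Lemma tends_bwd_p q : q <> p -> tends_bwd (Xdist d) flow_dom flow q p -> exists s, 0 < s /\ q = (s, x0).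
Proof.
  intros ne [hG hT]. destruct q as [s y].
  assert (y = x0) as ->.
  { apply (flow_approaching_p_on_axis s). intros eps he.
    destruct (hT eps he) as [T0 H]. exists T0. apply H; lra. }
  exists s. split; [|reflexivity].
  destruct (Rtotal_order s 0) as [hs|[hs|hs]]; [| exfalso; exact (neq_p_on_axis s x0 ne eq_refl hs)| exact hs].
  exfalso. destruct (hT (- s) ltac:(lra)) as [T0 H].
  set (t := Rmin T0 (-1)).
  assert (ht : t < 0) by (pose proof (Rmin_r T0 (-1)); unfold t; lra).
  assert (h1 : flow_fst t (s, x0) < s).
  { apply Rnot_le_lt. rewrite <- (flow_fst_sign t s x0); [lra| apply hG; lra| exact ne]. }
  specialize (H t (Rmin_l _ _)). destruct (Xdist_flow_p t (s, x0)) as [h2 _].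
  rewrite Rabs_left1 in h2 by lra. lra.
Qed.

Lemma flow_fake_singularity (K : S -> Prop) : is_compact d K -> is_nbhd d K x0 ->
  fake_singularity (Xdist d) flow_dom flow p.
Proof.
  intros hK hN. split; [exact (flow_isolated K hK hN)|].
  exists (-1, x0), (1, x0).
  split; [intros e; injection e; lra|]. split; [intros e; injection e; lra|]. split.
  - intros q ne hq. destruct (tends_fwd_p q ne hq) as [s [hs ->]].
    assert (hp : W_pos_on x0 (-1) s) by (apply W_pos_on_neg; lra).
    exists (transit x0 (-1) s). split; [right; now exists s|].
    unfold flow; simpl. now rewrite (flow_fst_eq _ (-1) x0 s hp eq_refl).
  - intros q ne hq. destruct (tends_bwd_p q ne hq) as [s [hs ->]].
    assert (hp : W_pos_on x0 1 s) by (apply W_pos_on_pos; lra).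
    exists (transit x0 1 s). split; [right; now exists s|].
    unfold flow; simpl. now rewrite (flow_fst_eq _ 1 x0 s hp eq_refl).
Qed.

Lemma flow_good (K : S -> Prop) : is_compact d K -> is_nbhd d K x0 -> good_flow d x0 W flow_dom flow.
Proof.
  intros hK hN. split; [exact flow_partial_flow|]. split; [intros t q _; reflexivity|].
  split; [exact (flow_fake_singularity K hK hN)| exact flow_deriv].
Qed.


Section Uniqueness.
Variables (G : R -> R * S -> Prop) (psi : R -> R * S -> R * S).
Hypothesis Hpsi : good_flow d x0 W G psi.

Lemma G_open t q : G t q ->
  exists rho, 0 < rho /\ forall t' q', Rabs (t - t') < rho -> Xdist d q q' < rho -> G t' q'.
Proof.
  intros h. destruct Hpsi as [[Ho _] _]. destruct (Ho (t, q) h) as [rho [hr H]].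
  exists rho; split; [exact hr|]. intros t' q' h1 h2. apply (H (t', q')), prod_dist_lt. auto.
Qed.

Lemma G_0 q : G 0 q.
Proof. apply Hpsi. Qed.

Lemma G_interval t q s : G t q -> (0 <= s <= t \/ t <= s <= 0) -> G s q.
Proof. apply Hpsi. Qed.

Lemma G_shift q t : G t q -> forall s, G s (psi t q) <-> G (s + t) q.
Proof. apply Hpsi. Qed.

Lemma psi_0 q : psi 0 q = q.
Proof. apply Hpsi. Qed.

Lemma psi_comp q t s : G t q -> G s (psi t q) -> psi s (psi t q) = psi (s + t) q.
Proof. apply Hpsi. Qed.

Lemma psi_horizontal t q : G t q -> psi t q = (fst (psi t q), snd q).
Proof. intros h. destruct Hpsi as [_ [H _]]. rewrite <- (H t q h). now destruct (psi t q). Qed.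

Lemma G_between a b tau q : G a q -> G b q -> a <= tau <= b -> G tau q.
Proof.
  intros ha hb h. destruct (Rle_dec 0 tau).
  - apply (G_interval b); [exact hb| lra].
  - apply (G_interval a); [exact ha| lra].
Qed.

Lemma psi_deriv t q : G t q -> derivable_pt_lim (fun tau => fst (psi tau q)) t (W (psi t q)).
Proof.
  intros h. destruct Hpsi as [_ [_ [_ Hder]]].
  destruct (G_open t q h) as [rho [hr Hr]].
  intros eps he. destruct (Hder (psi t q) eps he) as [del Hdel].
  assert (hp : 0 < Rmin del rho) by (apply Rmin_glb_lt; [apply cond_pos| exact hr]).
  exists (mkposreal _ hp). intros hh hn [h1 h2]%lt_Rmin.
  assert (hG : G (t + hh) q).
  { apply Hr; [|now rewrite (Xdist_refl Hd)].
    replace (t - (t + hh)) with (- hh) by ring. now rewrite Rabs_Ropp. }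
  assert (hG2 : G hh (psi t q)) by (apply G_shift; [exact h| now rewrite Rplus_comm]).
  assert (E : psi (t + hh) q = psi hh (psi t q)) by (rewrite psi_comp; auto; f_equal; ring).
  specialize (Hdel hh hn h1). rewrite Rplus_0_l, psi_0 in Hdel. now rewrite E.
Qed.

Lemma psi_continuity_pt t q : G t q -> continuity_pt (fun tau => fst (psi tau q)) t.
Proof. intros h. apply derivable_continuous_pt. eexists. now apply psi_deriv. Qed.

Lemma psi_mono q t1 t2 : G t1 q -> G t2 q -> t1 <= t2 -> fst (psi t1 q) <= fst (psi t2 q).
Proof.
  intros h1 h2 [h| ->]; [|lra].
  destruct (MVT_cor2 (fun tau => fst (psi tau q)) (fun c => W (psi c q)) t1 t2 h) as [c [hc _]].
  - intros c hc. apply psi_deriv, (G_between t1 t2); auto.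
  - pose proof (W_nonneg (psi c q)). nra.
Qed.

Lemma psi_hits q t0 t1 v : G t0 q -> G t1 q -> t0 <= t1 ->
  fst (psi t0 q) <= v <= fst (psi t1 q) -> exists tau, t0 <= tau <= t1 /\ fst (psi tau q) = v.
Proof.
  intros h0 h1 h hv. apply IVT_le; [exact h| |exact hv].
  intros x hx. apply psi_continuity_pt, (G_between t0 t1); auto.
Qed.

(* Along a trajectory of [psi], elapsed time is [transit]: both sides of the identity have
   derivative [1] in [t1]. *)
Lemma psi_transit q t0 t1 : t0 <= t1 -> G t0 q -> G t1 q ->
  W_pos_on (snd q) (fst (psi t0 q)) (fst (psi t1 q)) ->
  transit (snd q) (fst (psi t0 q)) (fst (psi t1 q)) = t1 - t0.
Proof.
  intros [h| ->] h0 h1 hp; [|rewrite transit_aa; ring].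
  set (y := snd q). set (a := fst (psi t0 q)). fold y a in hp.
  assert (ha1 : a <= fst (psi t1 q)) by (apply psi_mono; auto; lra).
  assert (hpath : forall c, t0 <= c <= t1 -> G c q /\ W_pos_on y a (fst (psi c q))).
  { intros c hc. assert (hG : G c q) by (apply (G_between t0 t1); auto).
    split; [exact hG|]. apply (W_pos_on_within y a (fst (psi t1 q))); [exact hp| lra|].
    split; apply psi_mono; auto; lra. }
  set (F := (comp (transit y a) (fun tau => fst (psi tau q)) - id)%F).
  destruct (MVT_cor2 F (fun _ => 0) t0 t1 h) as [c [hc _]].
  - intros c hc. destruct (hpath c hc) as [hG hpc].
    unfold F. replace 0 with (pace y (fst (psi c q)) * W (psi c q) - 1).
    + apply derivable_pt_lim_minus; [|apply derivable_pt_lim_id].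
      apply derivable_pt_lim_comp; [now apply psi_deriv| now apply transit_deriv].
    + assert (hw : W (psi c q) = W (fst (psi c q), y)) by (now rewrite (psi_horizontal c q hG) at 1).
      assert (0 < W (fst (psi c q), y)) by (apply hpc; split; [apply Rmin_r| apply Rmax_r]).
      rewrite hw. unfold pace. field. lra.
  - unfold F, minus_fct, comp, id in hc. unfold a in hc at 2. rewrite transit_aa in hc. fold a y. lra.
Qed.

Lemma transit_le_elapsed q t0 t1 a b : G t0 q -> G t1 q -> t0 <= t1 ->
  fst (psi t0 q) <= a -> a <= b -> b <= fst (psi t1 q) -> W_pos_on (snd q) a b ->
  transit (snd q) a b <= t1 - t0.
Proof.
  intros h0 h1 h ha hab hb hp.
  destruct (psi_hits q t0 t1 a) as [ta [hta ea]]; auto; [lra|].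
  assert (hGa : G ta q) by (apply (G_between t0 t1); auto).
  destruct (psi_hits q ta t1 b) as [tb [htb eb]]; auto; [lra| lra|].
  assert (hGb : G tb q) by (apply (G_between ta t1); auto).
  pose proof (psi_transit q ta tb (proj1 htb) hGa hGb) as E.
  rewrite ea, eb in E. rewrite (E hp). lra.
Qed.


(* [psi] cannot move [p]: leaving [0] would take longer than the divergent [transit]. *)
Lemma psi_p_fst t : G t p -> fst (psi t p) = 0.
Proof.
  intros ht. set (sg := fun tau => fst (psi tau p)). fold (sg t).
  assert (s0 : sg 0 = 0) by (unfold sg; now rewrite psi_0).
  destruct (Rtotal_order t 0) as [hn|[-> |hp]]; [| exact s0|].
  - assert (sg t <= 0) by (rewrite <- s0; apply psi_mono; [exact ht| apply G_0| lra]).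
    destruct (Req_dec (sg t) 0) as [e|ne]; [exact e|]. exfalso.
    set (c := Rmax (sg t) (- 1 / 2)).
    assert (hc : -1 < c < 0 /\ sg t <= c) by (unfold c, Rmax; destruct (Rle_dec (sg t) (- 1 / 2)); lra).
    destruct (transit_unbounded_left (- t) c) as [b [hb hT]]; [lra|].
    pose proof (transit_le_elapsed p t 0 c b ht (G_0 p) ltac:(lra)) as hle.
    simpl in hle. fold (sg t) (sg 0) in hle. rewrite s0 in hle.
    enough (transit x0 c b <= 0 - t) by lra. apply hle; [lra..| apply W_pos_on_neg; lra].
  - assert (0 <= sg t) by (rewrite <- s0; apply psi_mono; [apply G_0| exact ht| lra]).
    destruct (Req_dec (sg t) 0) as [e|ne]; [exact e|]. exfalso.
    set (c := Rmin (sg t) (1 / 2)).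
    assert (hc : 0 < c < 1 /\ c <= sg t) by (unfold c, Rmin; destruct (Rle_dec (sg t) (1 / 2)); lra).
    destruct (transit_unbounded_right t c) as [a [ha hT]]; [lra|].
    pose proof (transit_le_elapsed p 0 t a c (G_0 p) ht ltac:(lra)) as hle.
    simpl in hle. fold (sg t) (sg 0) in hle. rewrite s0 in hle.
    enough (transit x0 a c <= t - 0) by lra. apply hle; [lra..| apply W_pos_on_pos; lra].
Qed.

Lemma psi_p t : G t p -> psi t p = p.
Proof. intros h. rewrite (psi_horizontal t p h), psi_p_fst; auto. Qed.

Lemma G_p t : G t p.
Proof.
  destruct (G_open 0 p (G_0 p)) as [rho [hr Hr]].
  assert (step : forall tau h, G tau p -> Rabs h < rho -> G (h + tau) p).
  { intros tau h ht hh. apply G_shift; [exact ht|]. rewrite psi_p by exact ht.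
    apply Hr; [now rewrite Rminus_0_l, Rabs_Ropp| now rewrite (Xdist_refl Hd)]. }
  assert (ind : forall n h, Rabs h <= INR n * (rho / 2) -> G h p).
  { induction n as [|n IH]; intros h hh.
    - simpl in hh. replace h with 0 by (pose proof (Rabs_pos h); symmetry; apply Rabs_eq_0; lra).
      apply G_0.
    - rewrite S_INR in hh.
      destruct (Rle_dec (rho / 2) h).
      + replace h with (rho / 2 + (h - rho / 2)) by ring. apply step; [apply IH|].
        * rewrite Rabs_right in hh |- *; lra.
        * rewrite Rabs_right; lra.
      + destruct (Rle_dec h (- (rho / 2))).
        * replace h with (- (rho / 2) + (h + rho / 2)) by ring. apply step; [apply IH|].
          -- rewrite Rabs_left1 in hh |- *; lra.
          -- rewrite Rabs_Ropp, Rabs_right; lra.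
        * replace h with (h + 0) by ring. apply step; [apply G_0| apply Rabs_def1; lra]. }
  destruct (INR_archimed (rho / 2) (Rabs t)) as [n hn]; [lra|].
  apply (ind n). lra.
Qed.

Lemma psi_avoids_p q t : q <> p -> G t q -> psi t q <> p.
Proof.
  intros hq ht e. apply hq.
  assert (h1 : G (- t) (psi t q)) by (rewrite e; apply G_p).
  assert (E := psi_comp q t (- t) ht h1).
  rewrite e, psi_p in E by apply G_p.
  now rewrite Rplus_opp_l, psi_0 in E.
Qed.

Lemma psi_W_pos_on s y tau : (s, y) <> p -> G tau (s, y) -> W_pos_on y s (fst (psi tau (s, y))).
Proof.
  intros hq ht. set (sg := fun tau => fst (psi tau (s, y))). fold (sg tau).
  destruct (classic (y = x0)) as [->|ne]; [|now apply W_pos_on_off_axis].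
  assert (s0 : sg 0 = s) by (unfold sg; now rewrite psi_0).
  assert (hzero : forall tau', G tau' (s, x0) -> sg tau' <> 0).
  { intros tau' h e. apply (psi_avoids_p _ tau' hq h).
    rewrite (psi_horizontal tau' _ h). fold (sg tau'). now rewrite e. }
  assert (hG0 := G_0 (s, x0)).
  destruct (Rtotal_order s 0) as [hs|[hs|hs]]; [| exfalso; exact (neq_p_on_axis s x0 hq eq_refl hs)|].
  - apply W_pos_on_neg; [exact hs|]. destruct (Rle_dec tau 0).
    + assert (sg tau <= sg 0) by (apply psi_mono; auto). lra.
    + destruct (Rlt_dec (sg tau) 0) as [h1|h1]; [exact h1|]. exfalso.
      destruct (psi_hits (s, x0) 0 tau 0) as [x [hx ex]]; [auto| auto| lra| fold (sg 0) (sg tau); lra|].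
      apply (hzero x); [apply (G_between 0 tau); auto| exact ex].
  - apply W_pos_on_pos; [exact hs|]. destruct (Rle_dec 0 tau).
    + assert (sg 0 <= sg tau) by (apply psi_mono; auto). lra.
    + destruct (Rlt_dec 0 (sg tau)) as [h1|h1]; [exact h1|]. exfalso.
      destruct (psi_hits (s, x0) tau 0 0) as [x [hx ex]]; [auto| auto| lra| fold (sg 0) (sg tau); lra|].
      apply (hzero x); [apply (G_between tau 0); auto| exact ex].
Qed.

Lemma psi_agrees q t : q <> p -> G t q -> flow_dom t q /\ flow t q = psi t q.
Proof.
  intros hq ht. destruct q as [s y].
  set (sg := fun tau => fst (psi tau (s, y))).
  assert (s0 : sg 0 = s) by (unfold sg; now rewrite psi_0).
  assert (hp : W_pos_on y s (sg t)) by now apply psi_W_pos_on.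
  assert (hT : transit y s (sg t) = t).
  { destruct (Rle_dec 0 t) as [h|h].
    - pose proof (psi_transit (s, y) 0 t h (G_0 _) ht) as E. simpl in E.
      fold (sg 0) (sg t) in E. rewrite s0 in E. rewrite E by exact hp. ring.
    - pose proof (psi_transit (s, y) t 0 ltac:(lra) ht (G_0 _)) as E. simpl in E.
      fold (sg 0) (sg t) in E. rewrite s0 in E.
      assert (hp' := W_pos_on_sym _ _ _ hp).
      rewrite (transit_swap y (sg t) s hp'), E by exact hp'. ring. }
  split; [right; now exists (sg t)|].
  unfold flow. rewrite (psi_horizontal t _ ht). simpl. f_equal. now apply flow_fst_eq.
Qed.

(* [psi] is defined at least as long as [flow]: by real induction along [e * [0, a]],
   using continuity of [flow] and openness of the domain of [psi]. *)
Lemma G_of_flow_dom_dir q e a : q <> p -> (e = 1 \/ e = -1) -> 0 <= a ->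
  flow_dom (e * a) q -> G (e * a) q.
Proof.
  intros hq he ha hD.
  assert (hD' : forall x, 0 <= x <= a -> flow_dom (e * x) q)
    by (intros x hx; apply (flow_dom_interval q (e * a)); [exact hD| destruct he as [-> | ->]; [left|right]; lra]).
  assert (habs : forall x, Rabs (e * x) = Rabs x)
    by (intros x; rewrite Rabs_mult; destruct he as [-> | ->]; [rewrite Rabs_R1| rewrite (Rabs_left (-1)) by lra]; ring).
  enough (a < 0 \/ G (e * a) q) as [h|h]; [lra| exact h|].
  apply (real_induction 0 a (fun x => x < 0 \/ G (e * x) q)); [now left|].
  intros x hx.
  destruct (G_open 0 (flow (e * x) q) (G_0 _)) as [r [hr Hr]].
  destruct (flow_near (e * x) q (hD' x hx) r hr) as [del [hdel Hc]].
  set (rho := Rmin del r / 2).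
  assert (hrho : 0 < rho /\ 2 * rho <= del /\ 2 * rho <= r) by (unfold rho, Rmin; destruct (Rle_dec del r); lra).
  exists rho. split; [lra|].
  intros y hy hAy z hz.
  destruct (Rlt_dec z 0) as [hz0|hz0]; [now left| right].
  assert (hanchor : exists y', 0 <= y' /\ x - rho < y' /\ G (e * y') q).
  { destruct (Rle_dec 0 y) as [hy0|hy0].
    - destruct hAy as [h|h]; [lra| now exists y].
    - exists 0. rewrite Rmult_0_r. split; [lra| split; [lra| apply G_0]]. }
  destruct hanchor as [y' [hy'0 [hy'x hGy']]].
  destruct (Rle_dec z y') as [hzy|hzy].
  { apply (G_interval (e * y') q); [exact hGy'| destruct he as [-> | ->]; [left|right]; lra]. }
  destruct (psi_agrees q (e * y') hq hGy') as [_ hfy].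
  assert (hX : Xdist d (flow (e * x) q) (psi (e * y') q) < r).
  { rewrite <- hfy. apply (Hc (e * y') q); [|rewrite (Xdist_refl Hd); lra].
    rewrite <- Rmult_minus_distr_l, habs. apply Rabs_def1; lra. }
  assert (hstep : G (e * (z - y')) (psi (e * y') q)).
  { apply Hr; [|exact hX]. rewrite Rminus_0_l, Rabs_Ropp, habs, Rabs_right; lra. }
  apply (G_shift q (e * y') hGy') in hstep.
  now replace (e * z) with (e * (z - y') + e * y') by ring.
Qed.

Lemma G_of_flow_dom q t : q <> p -> flow_dom t q -> G t q.
Proof.
  intros hq h. destruct (Rle_dec 0 t).
  - rewrite <- (Rmult_1_l t) in h |- *. apply G_of_flow_dom_dir; auto.
  - replace t with (-1 * - t) in h |- * by ring. apply G_of_flow_dom_dir; auto; lra.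
Qed.

Lemma flow_unique :
  (forall t q, flow_dom t q <-> G t q) /\ (forall t q, flow_dom t q -> flow t q = psi t q).
Proof.
  split.
  - intros t q. destruct (classic (q = p)) as [->|ne].
    + split; intros; [apply G_p| now left].
    + split; intros h; [now apply G_of_flow_dom| now apply psi_agrees].
  - intros t q h. destruct (classic (q = p)) as [->|ne].
    + now rewrite flow_p, psi_p by apply G_p.
    + now apply psi_agrees, G_of_flow_dom.
Qed.

End Uniqueness.
End Flow.

Theorem mainTheorem12 (S : Type) (d : S -> S -> R) (x0 : S) (W : R * S -> R)
  (Hd : is_metric d)
  (Hx0 : exists K, is_compact d K /\ is_nbhd d K x0)
  (HW : is_continuous_on (Xdist d) absdist (fun _ => True) W)
  (HWp : W (0, x0) = 0)
  (HWpos : forall q, q <> (0, x0) -> 0 < W q)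
  (Hint_l : forall M, exists b, -1 < b < 0 /\
     exists pr : Riemann_integrable (fun s => / W (s, x0)) (-1) b, M < RiemannInt pr)
  (Hint_r : forall M, exists a, 0 < a < 1 /\
     exists pr : Riemann_integrable (fun s => / W (s, x0)) a 1, M < RiemannInt pr) :
  exists (G : R -> R * S -> Prop) (phi : R -> R * S -> R * S),
    good_flow d x0 W G phi /\
    forall (G' : R -> R * S -> Prop) (phi' : R -> R * S -> R * S),
      good_flow d x0 W G' phi' ->
      (forall t q, G t q <-> G' t q) /\ (forall t q, G t q -> phi t q = phi' t q).
Proof.
  destruct Hx0 as [K [hK hN]].
  assert (Hdiv_r : forall M, exists a, 0 < a < 1 /\ M < transit S W x0 a 1).
  { intros M. destruct (Hint_r M) as [a [ha [pr hpr]]]. exists a. split; [exact ha|].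
    unfold transit, pace. now rewrite (RInt_Reals _ _ _ pr). }
  assert (Hdiv_l : forall M, exists b, -1 < b < 0 /\ M < transit S W x0 (-1) b).
  { intros M. destruct (Hint_l M) as [b [hb [pr hpr]]]. exists b. split; [exact hb|].
    unfold transit, pace. now rewrite (RInt_Reals _ _ _ pr). }
  exists (flow_dom S x0 W), (flow S W). split.
  - exact (flow_good S d x0 W Hd HW HWp HWpos Hdiv_r Hdiv_l K hK hN).
  - intros G' phi' Hg. exact (flow_unique S d x0 W Hd HW HWp HWpos Hdiv_r Hdiv_l G' phi' Hg).
Qed.
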